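(* Let $G$ be the corresponding graph of an array $A$ with $n$ elements and reach one, and let $F$ be a resulting DFS forest of $G$. Merge the sub-trees of $F$, then apply the merge step to the resulting graph with the list of roots of $F$ (in some order); let $H$ be the resulting graph and $R$ the returned root list. Run DFS on $H$ with visiting list $R$, and let $F'$ be the resulting DFS forest. Then all components of $F'$ are directed paths.
   Context: An array is a finite sequence $A=(A[1],\dots,A[n])$ of pairwise distinct real numbers. A comparison graph on $A$ is a directed graph on $\{1,\dots,n\}$ all of whose arcs $(u,v)$ satisfy $A[u]<A[v]$. The corresponding graph of $A$ with reach one has an arc $(i,j)$ whenever $j\equiv i\pm1\pmod n$, $j\ne i$, and $A[i]<A[j]$. Components are connected components of the underlying undirected graph. DFS: adjacency lists sorted in increasing $A$-value; given a visiting list $(l_1,\dots,l_m)$ (for $F$, some ordering of all vertices), for each unvisited $l_t$ call Visit$(l_t)$, where Visit$(u)$ marks $u$ and, for each out-neighbour $w$ of $u$ in increasing $A$-value that is unvisited, sets parent$(w)=u$ and calls Visit$(w)$. The resulting DFS forest has arcs $(\mathrm{parent}(w),w)$; its roots are the vertices without parent. Merging the sub-trees of $F$: for each component of $F$ whose root has exactly two children $a_1,b_1$, set $p=a_1,q=b_1$ and, while both are defined: if $A[p]<A[q]$ add $(p,q)$ and replace $p$ by its smallest-valued child in $F$ (undefined if none); else add $(q,p)$ and replace $q$ likewise. Component merge of components $C,D$: set $p,q$ to the minimum-valued vertices of $C,D$; while both defined: if $A[p]<A[q]$ add $(p,q)$ and replace $p$ by the smallest-valued out-neighbour of $p$ within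 $C$ (ignoring arcs added in this merge; undefined if none); else add $(q,p)$ and replace $q$ analogously in $D$. Merge step with root list $(\rho_1,\dots,\rho_k)$ (the minimum-valued vertices of the components): component-merge the components of $\rho_{2j-1},\rho_{2j}$ for $j=1,\dots,\lfloor k/2\rfloor$ and return the list obtained by deleting the larger-valued root of each merged pair. *)

From HB Require Import structures.
From mathcomp Require Import all_boot all_order all_algebra.
From mathcomp Require Import reals.
Set Implicit Arguments. Unset Strict Implicit. Unset Printing Implicit Defensive.
Import Order.TTheory GRing.Theory Num.Theory.
Local Open Scope ring_scope.

Section Alg.
Variables (R : realType) (n : nat) (A : 'I_n -> R).

(* A directed graph on vertices 'I_n (vertex i+1 of the paper is i here),
   given by its set of arcs. *)
Definition graph := {set 'I_n * 'I_n}.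

Definition corr_graph : graph :=
  [set e : 'I_n * 'I_n |
     [&& ((val e.2 == (val e.1).+1 %% n)%N || (val e.1 == (val e.2).+1 %% n)%N),
         e.2 != e.1 & A e.1 < A e.2]].

Definition outs (g : graph) (u : 'I_n) : seq 'I_n :=
  sort (fun x y => A x <= A y) [seq w <- enum 'I_n | (u, w) \in g].

(* DFS state: (visited vertices, arcs (parent(w), w) of the forest so far) *)
Definition dfs_state := ({set 'I_n} * graph)%type.

(* Visit(u), with fuel bounding the recursion depth (n.+1 is ample). *)
Fixpoint visit (g : graph) (k : nat) (u : 'I_n) (st : dfs_state) : dfs_state :=
  match k with
  | 0 => st
  | k'.+1 =>
      foldl (fun (st : dfs_state) (w : 'I_n) => if w \in st.1 then st
                         else visit g k' w (st.1, (u, w) |: st.2))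
            (u |: st.1, st.2) (outs g u)
  end.

Definition dfs_forest (g : graph) (vis : seq 'I_n) : graph :=
  (foldl (fun (st : dfs_state) (l : 'I_n) => if l \in st.1 then st else visit g n.+1 l st)
         ((set0, set0) : dfs_state) vis).2.

Definition forest_roots (f : graph) : {set 'I_n} :=
  [set v | [forall u, (u, v) \notin f]].

Definition ucomp (g : graph) (x : 'I_n) : {set 'I_n} :=
  [set y | connect (fun a b => ((a, b) \in g) || ((b, a) \in g)) x y].

(* The common "while both p and q are defined" loop: if A p < A q add (p,q)
   and advance p by np, else add (q,p) and advance q by nq. Fuel k. *)
Fixpoint zip_merge (k : nat) (np nq : 'I_n -> option 'I_n)
    (p q : 'I_n) (acc : graph) : graph :=
  match k with
  | 0 => acc
  | k'.+1 =>
      if A p < A q then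
        let acc' := (p, q) |: acc in
        match np p with Some p' => zip_merge k' np nq p' q acc' | None => acc' end
      else
        let acc' := (q, p) |: acc in
        match nq q with Some q' => zip_merge k' np nq p q' acc' | None => acc' end
  end.

Definition first_child (f : graph) (p : 'I_n) : option 'I_n := ohead (outs f p).

Definition merge_subtrees (f : graph) : graph :=
  f :|: \bigcup_(r | (r \in forest_roots f) && (size (outs f r) == 2%N))
          zip_merge n.+1 (first_child f) (first_child f)
                    (nth r (outs f r) 0) (nth r (outs f r) 1) set0.

(* a minimum-valued vertex of C (d is a default, unused when C is nonempty) *)
Definition minv (C : {set 'I_n}) (d : 'I_n) : 'I_n :=
  odflt d [pick x in C | [forall y in C, A x <= A y]].

(* Component merge of C and D in graph g (neighbours are taken in g, i.e.
   ignoring the arcs added by this merge). *)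
Definition comp_merge (g : graph) (C D : {set 'I_n}) (d : 'I_n) : graph :=
  g :|: zip_merge n.+1
          (fun p => ohead [seq w <- outs g p | w \in C])
          (fun q => ohead [seq w <- outs g q | w \in D])
          (minv C d) (minv D d) set0.

Fixpoint merge_step (g : graph) (rs : seq 'I_n) : graph * seq 'I_n :=
  match rs with
  | r1 :: r2 :: rest =>
      let g' := comp_merge g (ucomp g r1) (ucomp g r2) r1 in
      let res := merge_step g' rest in
      (res.1, (if A r1 < A r2 then r1 else r2) :: res.2)
  | _ => (g, rs)
  end.

End Alg.

Definition is_dpath (n : nat) (g : graph n) (C : {set 'I_n}) : Prop :=
  exists s : seq 'I_n,
    [/\ uniq s, C = [set x in s] &
        forall x y, x \in C -> y \in C -> ((x, y) \in g) = ((x, y) \in zip s (behead s))].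

From HB Require Import structures.
From mathcomp Require Import all_boot all_order all_algebra.
From mathcomp Require Import reals.
From mathcomp Require Import zify.
Set Implicit Arguments. Unset Strict Implicit. Unset Printing Implicit Defensive.
Import Order.TTheory GRing.Theory Num.Theory.
Local Open Scope ring_scope.

(* Call a graph saturated when its arcs increase A and any two vertices x, y of a
   component that are consecutive in the order of A (A x < A y, nothing of the component
   in between) are joined by the arc (x, y).  A DFS of a saturated graph, with adjacency
   lists sorted by A and started from the minima of the components, walks through each
   component in increasing order and keeps exactly the arcs between consecutive vertices,
   so every component of its forest is a directed path.

   It remains to see that H is saturated and that R lists the minima of its components.
   In the reach-one graph every vertex has only two cyclic neighbours, so in the DFS
   forest F a non-root vertex, one of whose neighbours is its parent, has at most one
   child: each tree of F is a root with at most two chains hanging from it.  Merging the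
   two chains of a tree is a merge of two sorted lists, which adds exactly the missing
   arcs between consecutive vertices of different chains.  A component merge is again a
   merge of two sorted lists, the chains of consecutive vertices of the two components,
   so it preserves saturation, and the merge step keeps the smaller root of each merged
   pair, which is the minimum of the new component. *)

Lemma lt_fun_ind (T : finType) d (O : porderType d) (f : T -> O) (P : T -> Prop) :
  (forall x, (forall y, (f y < f x)%O -> P y) -> P x) -> forall x, P x.
Proof.
move=> IH x; have [k] := ubnP #|[set y | (f y < f x)%O]|.
elim: k x => // k IHk x; rewrite ltnS => le_k; apply: IH => y lt_yx; apply: IHk.
apply: leq_trans _ le_k; apply: proper_card; apply/properP; split.
  by apply/subsetP => z; rewrite !inE => /lt_trans; apply.
by exists y; rewrite !inE ?lt_yx ?ltxx.
Qed.

Lemma zip_path (T : eqType) (e : rel T) x s :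
  (forall a b, (a, b) \in zip (x :: s) s -> e a b) -> path e x s.
Proof.
elim: s x => //= y s IH x e_zip; rewrite e_zip ?mem_head //; apply: IH => a b ab.
by apply: e_zip; rewrite in_cons ab orbT.
Qed.

Section Components.
Variable n : nat.
Implicit Types (g : graph n) (x y z : 'I_n).

Definition uedge g : rel 'I_n := fun a b => ((a, b) \in g) || ((b, a) \in g).

Lemma uedgeC g : symmetric (uedge g).
Proof. by move=> a b; rewrite /uedge orbC. Qed.

Lemma ucompE g x y : (y \in ucomp g x) = connect (uedge g) x y.
Proof. by rewrite inE. Qed.

Lemma ucomp_refl g x : x \in ucomp g x.
Proof. by rewrite ucompE connect0. Qed.

Lemma ucompC g x y : (y \in ucomp g x) = (x \in ucomp g y).
Proof. by rewrite !ucompE (sym_connect_sym (uedgeC g)). Qed.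

Lemma ucomp_eq g x y : y \in ucomp g x -> ucomp g y = ucomp g x.
Proof.
rewrite ucompE => xy; apply/setP => z; rewrite !ucompE.
apply/idP/idP; first exact: connect_trans.
by apply: connect_trans; rewrite (sym_connect_sym (uedgeC g)).
Qed.

Lemma ucomp_memE g r y z : z \in ucomp g y -> (y \in ucomp g r) = (z \in ucomp g r).
Proof. by move=> yz; rewrite ucompC [z \in _]ucompC (ucomp_eq yz). Qed.

Lemma ucomp_arc g u v : (u, v) \in g -> v \in ucomp g u.
Proof. by move=> uv; rewrite ucompE connect1 // /uedge uv. Qed.

Lemma ucompS g g' x : g \subset g' -> ucomp g x \subset ucomp g' x.
Proof.
move=> sub; apply/subsetP => y; rewrite !ucompE; apply: connect_sub => a b.
by case/orP => ab; apply: connect1; rewrite /uedge (subsetP sub _ ab) ?orbT.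
Qed.

Lemma ucomp_blocks g (P : 'I_n -> {set 'I_n}) :
  (forall y, y \in P y) -> (forall y z, z \in P y -> P z = P y) ->
  (forall u v, (u, v) \in g -> v \in P u) ->
  (forall y z, z \in P y -> connect (uedge g) y z) ->
  forall y, ucomp g y = P y.
Proof.
move=> Prefl Peq Parc Pconn y; apply/setP => z; rewrite ucompE.
apply/idP/idP; last exact: Pconn.
have same_block a b : b \in P a -> (a \in P y) = (b \in P y).
  move=> ab; apply/idP/idP => [ay|by_]; first by rewrite -(Peq _ _ ay).
  by rewrite -(Peq _ _ by_) (Peq _ _ ab).
have closedP : closed (uedge g) (mem (P y)).
  by move=> a b /orP[] /Parc ab; rewrite /= (same_block _ _ ab).
by move=> yz; rewrite -(closed_connect closedP yz) /= Prefl.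
Qed.

End Components.

Section CyclicAdjacency.
Variable n : nat.
Implicit Types (a b c w x : 'I_n).

Definition cyc_adj w x := ((val x == (val w).+1 %% n) || (val w == (val x).+1 %% n))%N.

Lemma cyc_adjC w x : cyc_adj w x = cyc_adj x w.
Proof. by rewrite /cyc_adj orbC. Qed.

Lemma succ_mod_inj a b : ((val a).+1 %% n = (val b).+1 %% n)%N -> a = b.
Proof.
move/eqP; rewrite -(addn1 (val a)) -(addn1 (val b)) eqn_modDr !modn_small ?ltn_ord //.
by move/eqP/val_inj.
Qed.

Lemma cyc_adj_no3 w a b c : cyc_adj w a -> cyc_adj w b -> cyc_adj w c ->
  a != b -> a != c -> b != c -> False.
Proof.
have after x y : (val x == (val w).+1 %% n)%N -> (val y == (val w).+1 %% n)%N -> x == y.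
  by move=> /eqP xw /eqP yw; apply/eqP/val_inj; rewrite xw yw.
have before x y : (val w == (val x).+1 %% n)%N -> (val w == (val y).+1 %% n)%N -> x == y.
  by move=> /eqP wx /eqP wy; apply/eqP/succ_mod_inj; rewrite -wx -wy.
move=> /orP[]wa /orP[]wb /orP[]wc; rewrite ?(after _ _ wa wb) ?(after _ _ wa wc) ?(after _ _ wb wc).
all: by rewrite ?(before _ _ wa wb) ?(before _ _ wa wc) ?(before _ _ wb wc).
Qed.

End CyclicAdjacency.

Section Array.
Variables (R : realType) (n : nat) (A : 'I_n -> R).
Hypothesis A_inj : injective A.
Implicit Types (K S : {set 'I_n}) (x y z : 'I_n).

Lemma ltA_neqAle x y : (A x < A y) = (x != y) && (A x <= A y).
Proof. by rewrite lt_neqAle (inj_eq A_inj). Qed.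

(** * Successors in the order of A *)

Definition succ_in K x y : bool :=
  [&& x \in K, y \in K, A x < A y & [forall z in K, ~~ ((A x < A z) && (A z < A y))]].

Lemma succ_inP K x y : reflect [/\ x \in K, y \in K, A x < A y &
   forall z, z \in K -> ~~ ((A x < A z) && (A z < A y))] (succ_in K x y).
Proof.
by apply: (iffP and4P) => [[-> -> -> /forall_inP]|[-> -> -> /forall_inP]].
Qed.

Lemma succ_in_subset K K' x y : K \subset K' -> x \in K -> y \in K ->
  succ_in K' x y -> succ_in K x y.
Proof.
move=> /subsetP sub xK yK /succ_inP[_ _ xy between]; apply/succ_inP; split=> // z zK.
exact: between (sub _ zK).
Qed.

Lemma succ_in_fun K x y y' : succ_in K x y -> succ_in K x y' -> y = y'.
Proof.
move=> /succ_inP[_ yK xy between] /succ_inP[_ y'K xy' between'].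
case: (ltgtP (A y) (A y')) => [yy'|y'y|/A_inj //].
- by have := between' y yK; rewrite xy yy'.
- by have := between y' y'K; rewrite xy' y'y.
Qed.

Lemma succ_in_exists K x z : x \in K -> z \in K -> A x < A z -> exists y, succ_in K x y.
Proof.
move=> xK; elim/(lt_fun_ind (f:=A)): z => z IH zK xz.
have [|] := boolP (succ_in K x z); first by exists z.
rewrite {1}/succ_in xK zK xz /= => /forall_inPn[w wK]; rewrite negbK => /andP[xw wz].
exact: IH wz wK xw.
Qed.

Lemma no_succ_in_max K x : x \in K -> (forall y, ~~ succ_in K x y) ->
  forall z, z \in K -> A z <= A x.
Proof.
move=> xK no_succ z zK; rewrite leNgt; apply/negP => xz.
by have [y xy] := succ_in_exists xK zK xz; have := no_succ y; rewrite xy.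
Qed.

Lemma succ_in_ltE K x y z : succ_in K x y -> z \in K -> (A z < A y) = (A z <= A x).
Proof.
move=> /succ_inP[_ _ xy between] zK; apply/idP/idP => [zy|zx]; last exact: le_lt_trans zx xy.
by rewrite leNgt; apply: contraNN (between z zK) => xz; rewrite xz zy.
Qed.

Lemma succ_in_setU1 K h x y : (forall z, z \in K -> A h < A z) -> x != h ->
  succ_in (h |: K) x y = succ_in K x y.
Proof.
move=> h_below xh; apply/idP/idP => [xy|/succ_inP[xK yK xy between]].
  have /succ_inP[+ + hxy _] := xy; rewrite !in_setU1 (negbTE xh) /= => xK.
  case/orP => [/eqP yh|yK]; last by apply: succ_in_subset xy => //; apply: subsetU1.
  by have := lt_trans (h_below x xK) hxy; rewrite yh ltxx.
apply/succ_inP; split; rewrite ?in_setU1 ?xK ?yK ?orbT // => z.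
rewrite in_setU1 => /orP[/eqP->|]; last exact: between.
by rewrite [A x < _]ltNge (ltW (h_below x xK)).
Qed.

Lemma succ_in_setU1_min K h m : (forall z, z \in K -> A h < A z) ->
  m \in K -> (forall z, z \in K -> A m <= A z) -> succ_in (h |: K) h m.
Proof.
move=> h_below mK m_min; apply/succ_inP; split; rewrite ?setU11 ?in_setU1 ?mK ?orbT //.
  exact: h_below.
move=> z; rewrite in_setU1 => /orP[/eqP->|zK]; first by rewrite ltxx.
by rewrite [A z < _]ltNge m_min /= ?andbF.
Qed.

Definition leA : rel 'I_n := fun x y => A x <= A y.
Definition ltA : rel 'I_n := fun x y => A x < A y.
Definition sortA K := sort leA (enum K).

Lemma leA_total : total leA.
Proof. by move=> x y; apply: le_total. Qed.

Lemma leA_trans : transitive leA.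
Proof. by move=> x y z; apply: le_trans. Qed.

Lemma ltA_trans : transitive ltA.
Proof. by move=> x y z; apply: lt_trans. Qed.

Lemma mem_sortA K x : (x \in sortA K) = (x \in K).
Proof. by rewrite mem_sort mem_enum. Qed.

Lemma set_sortA K : [set x in sortA K] = K.
Proof. by apply/setP => x; rewrite inE mem_sortA. Qed.

Lemma sortA_uniq K : uniq (sortA K).
Proof. by rewrite sort_uniq enum_uniq. Qed.

Lemma sortA_sorted K : sorted ltA (sortA K).
Proof.
have le_sorted : sorted <=%O (map A (sortA K)).
  by rewrite sorted_map; exact: (sort_sorted leA_total (enum K)).
have : sorted <%O (map A (sortA K)).
  by rewrite lt_sorted_uniq_le le_sorted (map_inj_uniq A_inj) sortA_uniq.
by rewrite sorted_map.
Qed.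

Lemma mem_zip_succ_in s x y : sorted ltA s ->
  ((x, y) \in zip s (behead s)) = succ_in [set z in s] x y.
Proof.
elim: s => [|h [|h' t] IH] s_sorted.
- by apply/esym/negbTE/succ_inP; rewrite inE => -[].
- by apply/esym/negbTE/succ_inP; rewrite !inE => -[/eqP-> /eqP->]; rewrite ltxx.
have {IH}IH := IH (path_sorted s_sorted).
set T := [set z in h' :: t].
have h_below z : z \in T -> A h < A z.
  by rewrite inE; move: z; apply/allP; apply: order_path_min ltA_trans s_sorted.
have h'_min z : z \in T -> A h' <= A z.
  rewrite inE in_cons => /orP[/eqP->//|zt]; apply: ltW.
  by move: z zt; apply/allP; apply: order_path_min ltA_trans (path_sorted s_sorted).
have -> : [set z in [:: h, h' & t]] = h |: T by apply/setP => z; rewrite !inE.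
rewrite /= in_cons IH xpair_eqE.
have [->|xh] := eqVneq x h; last by rewrite succ_in_setU1.
have hh' : succ_in (h |: T) h h' by apply: succ_in_setU1_min; rewrite ?inE ?eqxx.
apply/idP/idP => [/orP[/eqP-> //|/succ_inP[hT _ _ _]]|/(succ_in_fun hh')->].
  by have := h_below h hT; rewrite ltxx.
by rewrite eqxx.
Qed.

(** * Merging two sorted chains *)

Definition upper K p := [set z in K | A p <= A z].

Lemma upper_succ K x y : succ_in K x y -> upper K x = x |: upper K y.
Proof.
move=> xy; have /succ_inP[xK _ _ _] := xy; apply/setP => z; rewrite !inE.
have [->|zx] := eqVneq z x; first by rewrite xK lexx.
have [zK|] //= := boolP (z \in K).
by rewrite [A y <= _]leNgt (succ_in_ltE xy zK) -ltNge ltA_neqAle eq_sym zx.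
Qed.

Lemma upper_succ_below K x y z : succ_in K x y -> z \in upper K y -> A x < A z.
Proof. by case/succ_inP => _ _ xy _; rewrite inE => /andP[_]; apply: lt_le_trans. Qed.

Lemma card_upper_succ K x y : succ_in K x y -> #|upper K x| = #|upper K y|.+1.
Proof.
move=> xy; have /succ_inP[_ _ /lt_geF yx _] := xy.
by rewrite (upper_succ xy) cardsU1 inE yx andbF /= add1n.
Qed.

Lemma upper_min K x : {in K, forall z, A x <= A z} -> upper K x = K.
Proof. by move=> x_min; apply/setP => z; rewrite inE andb_idr //; apply: x_min. Qed.

Lemma upper_max K x : x \in K -> {in K, forall z, A z <= A x} -> upper K x = [set x].
Proof.
move=> xK x_max; apply/setP => z; rewrite !inE.
apply/andP/eqP => [[zK xz]|->]; last by rewrite xK lexx.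
by apply: A_inj; apply/le_anti; rewrite xz x_max.
Qed.

(* Abstracts both advancing rules of the paper: the smallest-valued child along a chain
   of F, and the smallest-valued out-neighbour inside a component of a saturated graph. *)
Definition succ_fun (nx : 'I_n -> option 'I_n) K :=
  forall x, x \in K -> (forall y, nx x = Some y -> succ_in K x y) /\
                       (nx x = None -> forall z, z \in K -> A z <= A x).

Definition straddle S1 S2 x y := ((x \in S1) && (y \in S2)) || ((x \in S2) && (y \in S1)).

Lemma straddleC S1 S2 x y : straddle S1 S2 x y = straddle S2 S1 x y.
Proof. by rewrite /straddle orbC. Qed.

Section ZipMerge.
Implicit Types (np nq : 'I_n -> option 'I_n) (acc : graph n).

Lemma zip_merge_acc k np nq p q acc : acc \subset zip_merge A k np nq p q acc.
Proof.
elim: k p q acc => [|k IH] p q acc /=; first exact: subxx.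
case: ifP => _; [case: (np p) => [p'|]|case: (nq q) => [q'|]]; rewrite ?subsetU1 //.
all: exact: subset_trans (subsetU1 _ _) (IH _ _ _).
Qed.

Lemma mem_zip_merge_acc k np nq p q e acc : e \in zip_merge A k np nq p q (e |: acc).
Proof. exact: subsetP (zip_merge_acc _ _ _ _ _ _) _ (setU11 _ _). Qed.

Lemma zip_merge_first k np nq p q acc : (0 < k)%N ->
  ((p, q) \in zip_merge A k np nq p q acc) || ((q, p) \in zip_merge A k np nq p q acc).
Proof.
case: k => // k _ /=; case: ifP => _; [case: (np p) => [p'|]|case: (nq q) => [q'|]].
all: by rewrite ?setU11 ?mem_zip_merge_acc ?orbT.
Qed.

Lemma zip_merge_advance S S' nx p q x y :
  {in S, forall x, x \notin S'} -> succ_fun nx S -> p \in S -> q \in S' -> A p < A q ->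
  straddle S S' x y -> succ_in (upper S p :|: upper S' q) x y ->
  (x = p /\ y = q) \/ exists2 p', nx p = Some p' & succ_in (upper S p' :|: upper S' q) x y.
Proof.
move=> SS' nxS pS qS pq xy_str xy_succ; have /succ_inP[xT yT xy between] := xy_succ.
have p_min z : z \in upper S p :|: upper S' q -> A p <= A z.
  by case/setUP; rewrite inE => /andP[_] //; apply: le_trans (ltW pq).
have [xp|xp] := eqVneq x p.
  left; split=> //; subst x.
  have yS' : y \in S' by move: xy_str; rewrite /straddle pS (negbTE (SS' _ pS)) orbF.
  have qy : A q <= A y.
    case/setUP: yT; rewrite inE => /andP[yS //].
    by have := SS' y yS; rewrite yS'.
  have := between q; rewrite !inE qS lexx orbT pq /= -leNgt => /(_ isT) yq.
  by apply: A_inj; apply/le_anti; rewrite yq qy.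
right; have [nxp nx_max] := nxS p pS.
have px : A p < A x by rewrite ltA_neqAle eq_sym xp p_min.
case E: (nx p) => [p'|]; last first.
  have [u uS pu] : exists2 u, u \in S & A p < A u.
    by case/orP: xy_str => /andP[xS yS]; [exists x|exists y; rewrite // (lt_trans px)].
  by have := nx_max E u uS; rewrite leNgt pu.
exists p' => //; have pp' := nxp _ E.
have below z : z \in upper S p' :|: upper S' q -> A p < A z.
  by case/setUP => [/(upper_succ_below pp') //|]; rewrite inE => /andP[_ /(lt_le_trans pq)].
by rewrite -(succ_in_setU1 _ below xp) setUA -(upper_succ pp').
Qed.

Lemma card_upper_advance S S' p p' q : {in S, forall x, x \notin S'} -> succ_in S p p' ->
  (#|upper S p' :|: upper S' q| < #|upper S p :|: upper S' q|)%N.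
Proof.
move=> SS' pp'; have /succ_inP[pS _ pp'_lt _] := pp'.
rewrite (upper_succ pp') -setUA cardsU1 in_setU !inE (negbTE (SS' p pS)) (lt_geF pp'_lt).
by rewrite andbF /= add1n ltnSn.
Qed.

Variables (S1 S2 : {set 'I_n}).
Hypothesis S12 : {in S1, forall x, x \notin S2}.

Lemma zip_merge_arcs k np nq p q acc : succ_fun np S1 -> succ_fun nq S2 ->
  p \in S1 -> q \in S2 -> forall e, e \in zip_merge A k np nq p q acc ->
  e \in acc \/ (straddle S1 S2 e.1 e.2 /\ A e.1 < A e.2).
Proof.
move=> npS nqS; elim: k p q acc => [|k IH] p q acc pS qS e /=; first by left.
have [pq|qp] := ltP (A p) (A q).
- have new_arc e' : e' \in (p, q) |: acc ->
      e' \in acc \/ (straddle S1 S2 e'.1 e'.2 /\ A e'.1 < A e'.2).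
    by rewrite in_setU1 => /orP[/eqP-> /=|]; [right; rewrite /straddle pS qS|left].
  case E: (np p) => [p'|]; last exact: new_arc.
  have /succ_inP[_ p'S _ _] := (npS p pS).1 _ E.
  by case/(IH _ _ _ p'S qS) => [/new_arc|]; [|right].
- have new_arc e' : e' \in (q, p) |: acc ->
      e' \in acc \/ (straddle S1 S2 e'.1 e'.2 /\ A e'.1 < A e'.2).
    rewrite in_setU1 => /orP[/eqP-> /=|]; last by left.
    right; rewrite /straddle pS qS orbT; split=> //.
    by rewrite lt_neqAle qp andbT (inj_eq A_inj); apply: contraTneq qS => ->; apply: S12.
  case E: (nq q) => [q'|]; last exact: new_arc.
  have /succ_inP[_ q'S _ _] := (nqS q qS).1 _ E.
  by case/(IH _ _ _ pS q'S) => [/new_arc|]; [|right].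
Qed.

Lemma zip_merge_complete k np nq p q acc : succ_fun np S1 -> succ_fun nq S2 ->
  p \in S1 -> q \in S2 -> (#|upper S1 p :|: upper S2 q| <= k)%N ->
  forall x y, straddle S1 S2 x y -> succ_in (upper S1 p :|: upper S2 q) x y ->
  (x, y) \in zip_merge A k np nq p q acc.
Proof.
move=> npS nqS; have S21 : {in S2, forall x, x \notin S1}.
  by move=> x xS2; apply: contraTN xS2 => /S12.
elim: k p q acc => [|k IH] p q acc pS qS.
  by rewrite leqn0 => /eqP/cards0_eq/setP/(_ p); rewrite !inE pS lexx.
move=> Tk x y xy_str xy_succ /=; case: ltP => [pq|qp].
  have [[-> ->]|[p' E xy']] := zip_merge_advance S12 npS pS qS pq xy_str xy_succ.
    by case: (np p) => [p'|]; rewrite ?setU11 ?mem_zip_merge_acc.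
  have /succ_inP[_ p'S _ _] := (npS p pS).1 _ E.
  rewrite E; apply: (IH p' q _ p'S qS _ x y xy_str xy').
  exact: leq_trans (card_upper_advance _ S12 ((npS p pS).1 _ E)) Tk.
have {}qp : A q < A p.
  by rewrite lt_neqAle qp andbT (inj_eq A_inj); apply: contraTneq qS => ->; apply: S12.
rewrite straddleC in xy_str; rewrite setUC in xy_succ.
have [[-> ->]|[q' E xy']] := zip_merge_advance S21 nqS qS pS qp xy_str xy_succ.
  by case: (nq q) => [q'|]; rewrite ?setU11 ?mem_zip_merge_acc.
have /succ_inP[_ q'S _ _] := (nqS q qS).1 _ E.
rewrite E; apply: (IH p q' _ pS q'S _ x y); rewrite 1?straddleC 1?setUC //.
by rewrite setUC in Tk; exact: leq_trans (card_upper_advance _ S21 ((nqS q qS).1 _ E)) Tk.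
Qed.
End ZipMerge.

(** * Depth-first search on saturated graphs *)

Definition increasing (g : graph n) := forall u v, (u, v) \in g -> A u < A v.

Definition saturated (g : graph n) :=
  increasing g /\ forall x y, succ_in (ucomp g x) x y -> (x, y) \in g.

Definition succ_graph (g : graph n) : graph n := [set e | succ_in (ucomp g e.1) e.1 e.2].

Lemma ucomp_succ_graph g : ucomp (succ_graph g) =1 ucomp g.
Proof.
apply: ucomp_blocks => [y|y z|u v|y z yz]; first exact: ucomp_refl; first exact: ucomp_eq.
  by rewrite inE => /succ_inP[].
have zip_arc a b : (a, b) \in zip (sortA (ucomp g y)) (behead (sortA (ucomp g y))) ->
    uedge (succ_graph g) a b.
  rewrite mem_zip_succ_in ?sortA_sorted // set_sortA => ab; have /succ_inP[ya _ _ _] := ab.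
  by rewrite /uedge inE /= (ucomp_eq ya) ab.
have := mem_sortA (ucomp g y) y; have := mem_sortA (ucomp g y) z; rewrite ucomp_refl yz.
case: (sortA (ucomp g y)) zip_arc => [//|h t] /= /zip_path chain zs ys.
apply: connect_trans (path_connect chain zs); rewrite (sym_connect_sym (uedgeC _)).
exact: (path_connect chain) ys.
Qed.

Lemma succ_graph_dpath g x : is_dpath (succ_graph g) (ucomp (succ_graph g) x).
Proof.
rewrite ucomp_succ_graph; exists (sortA (ucomp g x)); split; rewrite ?sortA_uniq ?set_sortA //.
move=> a b xa _; rewrite inE /= (ucomp_eq xa).
by rewrite mem_zip_succ_in ?sortA_sorted // set_sortA.
Qed.

Definition succ_arcs K v : graph n := [set e | (e.1 \in upper K v) && succ_in K e.1 e.2].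

Lemma succ_arcs_succ K v w : succ_in K v w -> succ_arcs K v = (v, w) |: succ_arcs K w.
Proof.
move=> vw; apply/setP => -[a b]; rewrite /succ_arcs (upper_succ vw) !inE xpair_eqE /=.
have [-> /=|//] := eqVneq a v; have /succ_inP[_ _ /lt_geF-> _] := vw.
by rewrite andbF andFb orbF; apply/idP/eqP => [/(succ_in_fun vw)|->].
Qed.

Lemma succ_arcs_max K v : v \in K -> {in K, forall z, A z <= A v} -> succ_arcs K v = set0.
Proof.
move=> vK v_max; apply/setP => -[a b]; rewrite /succ_arcs (upper_max vK v_max) !inE.
apply/negbTE; apply/andP => -[/eqP-> /succ_inP[_ bK vb _]].
by have := v_max b bK; rewrite leNgt vb.
Qed.

Section Saturated.
Variable g : graph n.

Lemma mem_outs u w : (w \in outs A g u) = ((u, w) \in g).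
Proof. by rewrite mem_sort mem_filter mem_enum andbT. Qed.

Lemma outs_sorted u : sorted leA (outs A g u).
Proof. exact: (sort_sorted leA_total). Qed.

Lemma outs_uniq u : uniq (outs A g u).
Proof. by rewrite sort_uniq filter_uniq // enum_uniq. Qed.

Hypothesis g_sat : saturated g.

Lemma saturated_outs_upper v w : succ_in (ucomp g v) v w ->
  {subset outs A g v <= upper (ucomp g v) w}.
Proof.
move=> vw u; rewrite mem_outs inE => vu.
by rewrite ucomp_arc // leNgt (succ_in_ltE vw (ucomp_arc vu)) -ltNge g_sat.1.
Qed.

Lemma saturated_outs_succ v w : succ_in (ucomp g v) v w ->
  exists rest, outs A g v = w :: rest /\ {subset rest <= upper (ucomp g v) w}.
Proof.
move=> vw; have w_out : w \in outs A g v by rewrite mem_outs g_sat.2.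
case E: (outs A g v) (saturated_outs_upper vw) w_out => [//|h rest] up w_out.
have hw : A h <= A w.
  move: w_out; rewrite in_cons => /orP[/eqP-> //|wrest].
  by move: (outs_sorted v); rewrite E /= => /(order_path_min leA_trans)/allP/(_ w wrest).
have wh : A w <= A h by have := up h (mem_head _ _); rewrite inE => /andP[].
exists rest; split; first by congr (_ :: _); apply: A_inj; apply/le_anti; rewrite hw wh.
by move=> u ur; apply: up; rewrite in_cons ur orbT.
Qed.

Lemma saturated_outs_max v : {in ucomp g v, forall z, A z <= A v} -> outs A g v = [::].
Proof.
move=> v_max; case E: (outs A g v) => [//|u rest].
have vu : (v, u) \in g by rewrite -mem_outs E mem_head.
by have := v_max u (ucomp_arc vu); rewrite leNgt g_sat.1.
Qed.

Lemma foldl_skip (X : dfs_state n -> 'I_n -> dfs_state n) (s : seq 'I_n)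
    (st : dfs_state n) :
  {subset s <= st.1} ->
  foldl (fun (st : dfs_state n) w => if w \in st.1 then st else X st w) st s = st.
Proof.
elim: s => //= w s IH sub; rewrite sub ?mem_head // IH // => u us.
by apply: sub; rewrite in_cons us orbT.
Qed.

Lemma visit_saturated k v (vis : {set 'I_n}) (arcs : graph n) :
  {in ucomp g v, forall z, (z \in vis) = (A z < A v)} ->
  (#|upper (ucomp g v) v| <= k)%N ->
  visit A g k v (vis, arcs) =
    (vis :|: upper (ucomp g v) v, arcs :|: succ_arcs (ucomp g v) v).
Proof.
elim: k v vis arcs => [|k IH] v vis arcs vis_below.
  by rewrite leqn0 => /eqP/cards0_eq/setP/(_ v); rewrite in_set0 inE ucomp_refl lexx.
move=> Kk; set K := ucomp g v; have vK : v \in K := ucomp_refl g v.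
have [w vw|no_succ] := pickP (succ_in K v); last first.
  have v_max := no_succ_in_max vK (fun y => negbT (no_succ y)).
  rewrite /= saturated_outs_max //= (upper_max vK v_max) succ_arcs_max // setU0.
  by rewrite setUC.
(* The first out-neighbour of v is its successor w; visiting w marks every other
   out-neighbour, so the rest of the loop does nothing. *)
have [rest [outs_v rest_up]] := saturated_outs_succ vw.
have /succ_inP[_ wK vw_lt _] := vw.
have Kw : ucomp g w = K by apply: ucomp_eq.
have wv : w \notin v |: vis.
  rewrite in_setU1 negb_or vis_below // (lt_gtF vw_lt) /= andbT.
  by apply: contraTneq vw_lt => ->; rewrite ltxx.
rewrite /= outs_v /= (negbTE wv) IH Kw; first last.
- by move: Kk; rewrite (card_upper_succ vw) ltnS.
- move=> z zK.
  by rewrite in_setU1 vis_below // (succ_in_ltE vw zK) le_eqVlt (inj_eq A_inj).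
rewrite foldl_skip; last by move=> u /rest_up uw; rewrite in_setU uw orbT.
by rewrite (upper_succ vw) (succ_arcs_succ vw) setUCA setUA [arcs :|: _]setUCA setUA.
Qed.

Definition covered rs y := has (fun r => y \in ucomp g r) rs.

Definition root_list rs :=
  [/\ uniq rs, {in rs, forall r, {in ucomp g r, forall z, A r <= A z}} &
      {in rs &, forall r1 r2, r2 \in ucomp g r1 -> r1 = r2}].

Definition dfs_step (st : dfs_state n) (l : 'I_n) : dfs_state n :=
  if l \in st.1 then st else visit A g n.+1 l st.

Definition dfs_state_of P : dfs_state n :=
  ([set z | covered P z], [set e | covered P e.1 && succ_in (ucomp g e.1) e.1 e.2]).

Lemma covered_ucomp P r z : z \in ucomp g r -> covered P z = covered P r.
Proof. by move=> rz; apply: eq_has => r' /=; rewrite (ucomp_memE _ rz). Qed.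

Lemma covered_rcons P r z : covered (rcons P r) z = covered P z || (z \in ucomp g r).
Proof. by rewrite /covered -cats1 has_cat /= orbF. Qed.

Lemma root_list_cons r rs : root_list (r :: rs) -> root_list rs.
Proof.
case=> /andP[_ rs_uniq] rs_min rs_comp; split=> // [b brs|a b ars brs].
  by apply: rs_min; rewrite in_cons brs orbT.
by apply: rs_comp; rewrite in_cons ?ars ?brs orbT.
Qed.

Lemma root_list_uncovered r rs : root_list (r :: rs) -> {in ucomp g r, forall y, ~~ covered rs y}.
Proof.
case=> /andP[r_fresh _] _ rs_comp y ry; apply/hasPn => b brs; apply: contraNN r_fresh => by_.
have -> : r = b.
  apply: rs_comp; rewrite ?mem_head ?in_cons ?brs ?orbT //.
  by rewrite -(ucomp_eq ry) (ucomp_eq by_) ucomp_refl.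
exact: brs.
Qed.

Lemma root_list_uncovered2 r1 r2 rest : root_list [:: r1, r2 & rest] ->
  {in ucomp g r1 :|: ucomp g r2, forall y, ~~ covered rest y}.
Proof.
move=> rl y /setUP[/(root_list_uncovered rl)|/(root_list_uncovered (root_list_cons rl)) //].
by rewrite /covered /= negb_or => /andP[].
Qed.

Lemma dfs_step_saturated P r : ~~ covered P r -> {in ucomp g r, forall z, A r <= A z} ->
  dfs_step (dfs_state_of P) r = dfs_state_of (rcons P r).
Proof.
move=> r_new r_min; rewrite /dfs_step inE (negbTE r_new) visit_saturated; first last.
- by rewrite (leq_trans (max_card _)) ?card_ord.
- by move=> z rz; rewrite inE (covered_ucomp _ rz) (negbTE r_new) ltNge r_min.
rewrite /succ_arcs upper_min //; congr pair; apply/setP => e.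
  by rewrite in_setU !inE -ucompE covered_rcons.
rewrite in_setU !inE -ucompE covered_rcons.
have [er|_] := boolP (e.1 \in ucomp g r); last by rewrite orbF andFb orbF.
by rewrite (ucomp_eq er) (covered_ucomp _ er) (negbTE r_new).
Qed.

Lemma foldl_dfs_step P s : root_list (P ++ s) ->
  foldl dfs_step (dfs_state_of P) s = dfs_state_of (P ++ s).
Proof.
elim: s P => [|r s IH] P; first by rewrite cats0.
move=> rl; have [Prs_uniq Prs_min Prs_comp] := rl.
have r_in : r \in P ++ r :: s by rewrite mem_cat mem_head orbT.
have r_fresh : r \notin P.
  by move: Prs_uniq; rewrite cat_uniq => /and3P[_ /hasPn r_fresh _]; apply: r_fresh (mem_head _ _).
have r_new : ~~ covered P r.
  apply/hasPn => r' r'P; apply: contraNN r_fresh => r'r.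
  by rewrite -(Prs_comp r' r) // mem_cat r'P.
rewrite /= dfs_step_saturated //; last exact: Prs_min.
by rewrite (IH (rcons P r)) -cats1 -catA.
Qed.

Lemma dfs_forest_saturated rs : root_list rs -> (forall y, covered rs y) ->
  dfs_forest A g rs = succ_graph g.
Proof.
move=> rl cov; have start : ((set0, set0) : dfs_state n) = dfs_state_of [::].
  by congr pair; apply/setP => z; rewrite !inE.
change ((foldl dfs_step ((set0, set0) : dfs_state n) rs).2 = succ_graph g).
by rewrite start foldl_dfs_step //=; apply/setP => e; rewrite !inE cov.
Qed.

End Saturated.

(** * Component merge and merge step *)

Definition next_in (g : graph n) K p := ohead [seq w <- outs A g p | w \in K].

Lemma succ_fun_next_in g r : saturated g -> succ_fun (next_in g (ucomp g r)) (ucomp g r).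
Proof.
move=> g_sat x xC; rewrite -(ucomp_eq xC) /next_in; have {xC}xC := ucomp_refl g x.
have -> : [seq w <- outs A g x | w \in ucomp g x] = outs A g x.
  by apply/all_filterP/allP => w; rewrite mem_outs; apply: ucomp_arc.
have [w xw|no_succ] := pickP (succ_in (ucomp g x) x).
  by have [rest [-> _]] := saturated_outs_succ g_sat xw; split=> // y [<-].
have x_max := no_succ_in_max xC (fun y => negbT (no_succ y)).
by rewrite saturated_outs_max.
Qed.

Lemma minv_eq K d r : r \in K -> {in K, forall z, A r <= A z} -> minv A K d = r.
Proof.
move=> rK r_min; rewrite /minv; case: pickP => [x /andP[xK /forall_inP x_min]|].
  by apply: A_inj; apply/le_anti; rewrite r_min // x_min.
by move/(_ r); rewrite rK /=; case: forall_inP.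
Qed.

Section ComponentMerge.
Variables (g : graph n) (r1 r2 : 'I_n).
Hypotheses (g_sat : saturated g) (r1_min : {in ucomp g r1, forall z, A r1 <= A z})
  (r2_min : {in ucomp g r2, forall z, A r2 <= A z}) (r21 : r2 \notin ucomp g r1).

Let C := ucomp g r1.
Let D := ucomp g r2.
Let Z := zip_merge A n.+1 (next_in g C) (next_in g D) r1 r2 set0.
Let g' := comp_merge A g C D r1.

Lemma comp_mergeE : g' = g :|: Z.
Proof.
rewrite /g' /comp_merge (minv_eq _ (ucomp_refl g r1) r1_min).
by rewrite (minv_eq _ (ucomp_refl g r2) r2_min).
Qed.

Lemma comp_merge_disjoint : {in C, forall x, x \notin D}.
Proof. by move=> x xC; apply: contra r21; rewrite -[x \in D](ucomp_memE r2 xC) ucompC. Qed.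

Lemma comp_merge_new_arcs e : e \in Z -> straddle C D e.1 e.2 /\ A e.1 < A e.2.
Proof.
move=> eZ; have [|//] := zip_merge_arcs comp_merge_disjoint (succ_fun_next_in g_sat)
  (succ_fun_next_in g_sat) (ucomp_refl g r1) (ucomp_refl g r2) eZ.
by rewrite in_set0.
Qed.

Lemma comp_merge_new_arcs_complete x y : straddle C D x y -> succ_in (C :|: D) x y -> (x, y) \in Z.
Proof.
move=> xy_str xy_succ.
have CD : upper C r1 :|: upper D r2 = C :|: D by rewrite (upper_min r1_min) (upper_min r2_min).
apply: (zip_merge_complete comp_merge_disjoint set0 (succ_fun_next_in g_sat)
  (succ_fun_next_in g_sat) (ucomp_refl g r1) (ucomp_refl g r2)) xy_str _; rewrite CD //.
by rewrite (leq_trans (max_card _)) ?card_ord.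
Qed.

Lemma comp_merge_closed y z : z \in ucomp g y -> (y \in C :|: D) = (z \in C :|: D).
Proof. by move=> yz; rewrite !in_setU /C /D (ucomp_memE r1 yz) (ucomp_memE r2 yz). Qed.

Lemma ucomp_comp_merge y : ucomp g' y = if y \in C :|: D then C :|: D else ucomp g y.
Proof.
have g_sub : g \subset g' by rewrite comp_mergeE subsetUl.
have CD_conn w : w \in C :|: D -> w \in ucomp g' r1.
  have r2_in : r2 \in ucomp g' r1.
    rewrite ucompE; apply: connect1; rewrite /uedge comp_mergeE !in_setU.
    have : ((r1, r2) \in Z) || ((r2, r1) \in Z) by apply: zip_merge_first.
    by case/orP => ->; rewrite !orbT.
  case/setUP => [wC|wD]; first exact: subsetP (ucompS r1 g_sub) _ wC.
  by rewrite -(ucomp_eq r2_in); apply: subsetP (ucompS r2 g_sub) _ wD.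
move: y; apply: (ucomp_blocks (P := fun y => if y \in C :|: D then C :|: D else ucomp g y))
  => [y|y z|u v|y z].
- by case: ifP => // _; apply: ucomp_refl.
- case: ifP => [yCD zCD|yCD yz]; first by rewrite zCD.
  by rewrite -(comp_merge_closed yz) yCD (ucomp_eq yz).
- rewrite comp_mergeE in_setU => /orP[uv|/comp_merge_new_arcs[uv_str _]].
    by case: ifP => uCD; [rewrite -(comp_merge_closed (ucomp_arc uv))|apply: ucomp_arc].
  by case/orP: uv_str => /= /andP[uS vS]; rewrite in_setU uS ?orbT /= in_setU vS ?orbT.
rewrite -ucompE; case: ifP => [yCD zCD|_ yz]; last exact: subsetP (ucompS y g_sub) _ yz.
by rewrite (ucomp_eq (CD_conn _ yCD)) CD_conn.
Qed.

Lemma comp_merge_saturated : saturated g'.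
Proof.
split=> [u v|x y].
  by rewrite comp_mergeE in_setU => /orP[/g_sat.1 //|/comp_merge_new_arcs[]].
rewrite ucomp_comp_merge comp_mergeE.
case: ifP => [xCD xy|_ /g_sat.2 xy]; rewrite in_setU ?xy //.
have /succ_inP[_ yCD _ _] := xy.
have in_one S : x \in S -> y \in S -> ucomp g x = S -> S \subset C :|: D -> (x, y) \in g.
  move=> xS yS Sx sub; apply: g_sat.2; rewrite Sx; exact: succ_in_subset sub xS yS xy.
case/setUP: xCD => [xC|xD]; case/setUP: yCD => [yC|yD].
- by rewrite (in_one C) ?(ucomp_eq xC) ?subsetUl.
- by rewrite comp_merge_new_arcs_complete ?orbT // /straddle xC yD.
- by rewrite comp_merge_new_arcs_complete ?orbT // /straddle xD yC orbT.
- by rewrite (in_one D) ?(ucomp_eq xD) ?subsetUr.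
Qed.
End ComponentMerge.

Lemma merge_pair_spec g r1 r2 rest : saturated g -> root_list g [:: r1, r2 & rest] ->
  let g' := comp_merge A g (ucomp g r1) (ucomp g r2) r1 in
  [/\ saturated g', root_list g' rest, covered g' rest =1 covered g rest,
      {in ~: (ucomp g r1 :|: ucomp g r2), ucomp g' =1 ucomp g} &
      ucomp g' r1 = ucomp g r1 :|: ucomp g r2].
Proof.
move=> g_sat rl g'; have [/andP[r1_fresh _] rs_min rs_comp] := rl.
have r2_in : r2 \in [:: r1, r2 & rest] by rewrite !inE eqxx orbT.
have r1_min := rs_min r1 (mem_head _ _).
have r2_min := rs_min r2 r2_in.
have r21 : r2 \notin ucomp g r1.
  by apply: contraNN r1_fresh => /(rs_comp _ _ (mem_head _ _) r2_in) ->; apply: mem_head.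
have CD_uncovered := root_list_uncovered2 rl.
have ucomp_g' := ucomp_comp_merge g_sat r1_min r2_min r21.
have ucomp_rest : {in rest, forall r, ucomp g' r = ucomp g r}.
  move=> r rr; rewrite ucomp_g'; case: ifP => // /CD_uncovered /hasPn/(_ r rr).
  by rewrite ucomp_refl.
split.
- exact: comp_merge_saturated.
- have [rest_uniq rest_min rest_comp] := root_list_cons (root_list_cons rl).
  split=> //; first by move=> r rr; rewrite ucomp_rest //; apply: rest_min.
  by move=> a b ar br; rewrite ucomp_rest //; apply: rest_comp.
- by move=> y; apply: eq_in_has => r rr /=; rewrite ucomp_rest.
- by move=> y; rewrite in_setC => /negbTE yCD; rewrite ucomp_g' yCD.
- by rewrite ucomp_g' in_setU ucomp_refl.
Qed.

Lemma merge_step_spec g rs : saturated g -> root_list g rs ->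
  let: (H, R') := merge_step A g rs in
  [/\ saturated H, root_list H R', covered H R' =1 covered g rs,
      {in predC (covered g rs), ucomp H =1 ucomp g} & {subset R' <= rs}].
Proof.
have [k] := ubnP (size rs); elim: k rs g => // k IH [|r1 [|r2 rest]] g rs_k g_sat rl /=;
  [by split|by split|].
have [g'_sat rl' cov' fix' g'r1] := merge_pair_spec g_sat rl.
set g' := comp_merge _ _ _ _ _ in g'_sat rl' cov' fix' g'r1 *.
have := IH rest g' _ g'_sat rl'; case: (merge_step A g' rest) => [H R'].
move=> [|H_sat rlH covH fixH subH]; first by rewrite /= !ltnS in rs_k; apply: ltnW.
have [_ rs_min _] := rl; have [R'_uniq R'_min R'_comp] := rlH.
rewrite /=; set r := if A r1 < A r2 then r1 else r2.
have r_le1 : A r <= A r1 by rewrite /r; case: ltP => // /ltW.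
have r_le2 : A r <= A r2 by rewrite /r; case: ltP => // /ltW.
have r_CD : r \in ucomp g r1 :|: ucomp g r2.
  by rewrite /r; case: ifP; rewrite in_setU ucomp_refl ?orbT.
have r_new : ~~ covered g' rest r by rewrite cov' (root_list_uncovered2 rl).
have Hr : ucomp H r = ucomp g r1 :|: ucomp g r2.
  have r_g' : r \in ucomp g' r1 by rewrite g'r1.
  by rewrite fixH // (ucomp_eq r_g') g'r1.
have R'_out b : b \in R' -> r \notin ucomp H b.
  by move=> bR; apply: contraNN r_new => rb; rewrite -covH; apply/hasP; exists b.
have r_fresh : r \notin R' by apply/negP => /R'_out; rewrite ucomp_refl.
split=> //.
- split=> [|a|a b]; first by rewrite /= r_fresh.
    rewrite in_cons => /orP[/eqP-> z|/R'_min //].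
    rewrite Hr => /setUP[zC|zD]; first exact: le_trans r_le1 (rs_min r1 (mem_head _ _) z zC).
    by apply: le_trans r_le2 (rs_min r2 _ z zD); rewrite !inE eqxx orbT.
  rewrite !in_cons => /orP[/eqP->|aR] /orP[/eqP->|bR] //.
  + by rewrite ucompC (negbTE (R'_out b bR)).
  + by rewrite (negbTE (R'_out a aR)).
  + exact: R'_comp.
- by move=> y; rewrite /covered /= -/(covered H R' y) covH cov' Hr in_setU -orbA.
- move=> y; rewrite inE /covered /= -/(covered g rest y) !negb_or => /and3P[yC yD y_rest].
  by rewrite fixH ?inE ?cov' // fix' // in_setC in_setU negb_or yC yD.
- move=> a; rewrite in_cons => /orP[/eqP->|/subH ar]; last by rewrite !in_cons ar !orbT.
  by rewrite /r; case: ifP; rewrite !inE eqxx ?orbT.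
Qed.

(** * Depth-first search forests *)

Definition parent_unique (f : graph n) := forall a a' b, (a, b) \in f -> (a', b) \in f -> a = a'.

(* [pending] accounts for the vertex whose tree arc has been added but which the
   recursive visit has not marked yet. *)
Definition dfs_inv (g : graph n) (st : dfs_state n) (pending : pred 'I_n) :=
  [/\ st.2 \subset g, forall a b, (a, b) \in st.2 -> (b \in st.1) || pending b &
      parent_unique st.2].

Lemma cardsC_shrink S S' u k : u \notin S -> u |: S \subset S' ->
  (#|~: S| <= k.+1)%N -> (#|~: S'| <= k)%N.
Proof.
move=> uS /subset_leq_card sub; have := cardsC S; have := cardsC S'.
by have := cardsU1 u S; rewrite uS; lia.
Qed.

Lemma dfs_inv_add_arc g st u w : dfs_inv g st pred0 -> (u, w) \in g -> w \notin st.1 ->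
  dfs_inv g (st.1, (u, w) |: st.2) (pred1 w).
Proof.
case=> sub visited uniq_par uw wst; split=> /=.
- by rewrite subUset sub1set uw.
- move=> a b; rewrite in_setU1 => /orP[/eqP[_ ->]|/visited]; first by rewrite eqxx orbT.
  by rewrite orbF => ->.
- have parent_w x : (x, w) \in (u, w) |: st.2 -> x = u.
    rewrite in_setU1 => /orP[/eqP[] //|/visited]; by rewrite orbF (negbTE wst).
  move=> a a' b; have [-> /parent_w-> /parent_w-> //|bw] := eqVneq b w.
  by rewrite !in_setU1 !xpair_eqE (negbTE bw) !andbF /=; apply: uniq_par.
Qed.

Lemma visit_inv g k u st : dfs_inv g st (pred1 u) -> u \notin st.1 -> (#|~: st.1| <= k)%N ->
  dfs_inv g (visit A g k u st) pred0 /\ u |: st.1 \subset (visit A g k u st).1.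
Proof.
elim: k u st => [|k IH] u st inv ust.
  by rewrite leqn0 => /eqP/cards0_eq/setP/(_ u); rewrite !inE ust.
move=> st_k /=; have out_g w : w \in outs A g u -> (u, w) \in g by rewrite mem_outs.
have inv_u : dfs_inv g (u |: st.1, st.2) pred0 /\ u |: st.1 \subset (u |: st.1, st.2).1.
  case: inv => sub visited uniq_par; split=> //; split=> //= a b /visited.
  by rewrite in_setU1 orbF orbC.
elim: (outs A g u) (u |: st.1, st.2) inv_u out_g => [|w s IHs] st0 [inv0 sub0] out_s /=.
  by split.
apply: IHs => [|x xs]; last by apply: out_s; rewrite in_cons xs orbT.
case: ifP => wst //; have wst' := negbT wst.
have [inv1 sub1] := IH w _ (dfs_inv_add_arc inv0 (out_s w (mem_head _ _)) wst') wst'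
  (cardsC_shrink ust sub0 st_k).
by split=> //; apply: subset_trans sub0 (subset_trans (subsetU1 _ _) sub1).
Qed.

Lemma dfs_forest_inv g vis : dfs_forest A g vis \subset g /\ parent_unique (dfs_forest A g vis).
Proof.
have : dfs_inv g ((set0, set0) : dfs_state n) pred0.
  by split=> [|a b|a a' b] /=; rewrite ?sub0set ?in_set0.
change (dfs_forest A g vis) with (foldl (dfs_step g) ((set0, set0) : dfs_state n) vis).2.
elim: vis ((set0, set0) : dfs_state n) => [|l s IH] st /=; first by case.
move=> inv; apply: IH; rewrite /dfs_step; case: ifP => // lst.
have inv_l : dfs_inv g st (pred1 l).
  by case: inv => sub visited uniq_par; split=> // a b /visited; rewrite orbF => ->.
have st_k : (#|~: st.1| <= n.+1)%N by rewrite (leq_trans (max_card _)) ?card_ord.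
by have [] := visit_inv inv_l (negbT lst) st_k.
Qed.

(** * Merging the subtrees of a forest *)

Section Forest.
Variable f : graph n.
Hypotheses (f_incr : increasing f) (f_par : parent_unique f).
Hypothesis f_child : forall u w c1 c2, (u, w) \in f -> (w, c1) \in f -> (w, c2) \in f -> c1 = c2.

Definition tree_rel : rel 'I_n := fun x y => (x, y) \in f.
Definition desc a := [set y | connect tree_rel a y].
Definition has_parent a := exists u, (u, a) \in f.

Lemma forest_rootsP r : reflect (forall u, (u, r) \notin f) (r \in forest_roots f).
Proof. by rewrite inE; apply: (iffP forallP). Qed.

Lemma desc_refl a : a \in desc a.
Proof. by rewrite inE connect0. Qed.

Lemma desc_le a y : y \in desc a -> A a <= A y.
Proof.
rewrite inE => /connectP[p p_path ->]; elim: p a p_path => [|b p IH] a /=; first by rewrite lexx.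
by case/andP => /f_incr ab /IH; apply/le_trans/ltW.
Qed.

Lemma desc_parent a y : y \in desc a -> y != a -> exists2 p, p \in desc a & (p, y) \in f.
Proof.
rewrite inE => /connectP[s]; case/lastP: s => [|s b] /=; first by move=> _ ->; rewrite eqxx.
rewrite rcons_path last_rcons => /andP[s_path sb] -> _; exists (last a s) => //.
by rewrite inE; apply/connectP; exists s.
Qed.

Lemma desc_first a y : y \in desc a -> y != a -> exists2 c, (a, c) \in f & y \in desc c.
Proof.
rewrite inE => /connectP[[|c s] /= p_path ->]; first by rewrite eqxx.
by case/andP: p_path => ac s_path _; exists c; rewrite // inE; apply/connectP; exists s.
Qed.

Lemma desc_arc a b : (a, b) \in f -> b \in desc a.
Proof. by move=> ab; rewrite inE connect1. Qed.

Lemma desc_trans a b y : b \in desc a -> y \in desc b -> y \in desc a.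
Proof. by rewrite !inE; apply: connect_trans. Qed.

Lemma desc_ucomp a : {subset desc a <= ucomp f a}.
Proof.
move=> y; rewrite inE ucompE; apply: connect_sub => x z xz.
by apply: connect1; apply/orP; left.
Qed.

Lemma root_desc r : r \in forest_roots f -> {subset ucomp f r <= desc r}.
Proof.
move=> /forest_rootsP r_root z; rewrite ucompE.
have same a b : (a, b) \in f -> (a \in desc r) = (b \in desc r).
  move=> ab; apply/idP/idP => [ra|rb]; first exact: desc_trans ra (desc_arc ab).
  have br : b != r by apply: contraTneq ab => ->; apply: r_root.
  by have [p rp /(f_par ab)->] := desc_parent rb br.
have closed_desc : closed (uedge f) (mem (desc r)).
  by move=> a b /orP[ab|ba]; [exact: same ab|exact/esym/same].
by move=> rz; have := closed_connect closed_desc rz; rewrite /= desc_refl => <-.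
Qed.

Lemma root_min r : r \in forest_roots f -> {in ucomp f r, forall z, A r <= A z}.
Proof. by move=> r_root z /(root_desc r_root); apply: desc_le. Qed.

Lemma root_uniq r1 r2 : r1 \in forest_roots f -> r2 \in forest_roots f ->
  r2 \in ucomp f r1 -> r1 = r2.
Proof.
move=> r1_root /forest_rootsP r2_root /(root_desc r1_root) r12.
have [//|r21] := eqVneq r2 r1; have [p _ pr2] := desc_parent r12 r21.
by have := r2_root p; rewrite pr2.
Qed.

Lemma root_exists y : exists2 r, r \in forest_roots f & y \in ucomp f r.
Proof.
elim/(lt_fun_ind (f:=A)): y => y IH.
have [y_root|] := boolP (y \in forest_roots f); first by exists y; rewrite ?ucomp_refl.
case/forest_rootsP/forallP/forallPn => p; rewrite negbK => py.
have [r r_root pr] := IH p (f_incr py).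
by exists r; rewrite // -(ucomp_eq pr) ucomp_arc.
Qed.

Lemma ucomp_root_cases r z : r \in forest_roots f -> z \in ucomp f r ->
  z = r \/ exists2 c, (r, c) \in f & z \in desc c.
Proof.
move=> r_root /(root_desc r_root) rz; have [->|zr] := eqVneq z r; first by left.
by right; apply: desc_first.
Qed.

Lemma desc_disjoint r a b z : (r, a) \in f -> (r, b) \in f -> a != b ->
  z \in desc a -> z \notin desc b.
Proof.
move=> ra rb ab; elim/(lt_fun_ind (f:=A)): z => z IH za; apply/negP => zb.
have top c c' : (r, c) \in f -> (r, c') \in f -> c \in desc c' -> c = c'.
  move=> rc rc' cc'; have [//|c'c] := eqVneq c c'.
  have [p c'p /(f_par rc) pr] := desc_parent cc' c'c.
  by have := desc_le c'p; rewrite -pr leNgt f_incr.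
have [za'|zna] := eqVneq z a; first by subst z; move: ab; rewrite (top _ _ ra rb zb) eqxx.
have [zb'|znb] := eqVneq z b; first by subst z; move: ab; rewrite (top _ _ rb ra za) eqxx.
have [p1 ap1 p1z] := desc_parent za zna; have [p2 bp2 p2z] := desc_parent zb znb.
by move: (f_par p1z p2z) => p12; have := IH p1 (f_incr p1z) ap1; rewrite p12 bp2.
Qed.

Lemma desc_total a y z : has_parent a -> y \in desc a -> z \in desc a ->
  (z \in desc y) || (y \in desc z).
Proof.
move=> [u ua]; rewrite [y \in _]inE => /connectP[p p_path ->] {y}.
elim: p a u ua p_path z => [|c p IH] a u ua /=; first by move=> _ z ->.
case/andP=> ac p_path z az; have [->|za] := eqVneq z a.
  by apply/orP; right; rewrite inE; apply/connectP; exists (c :: p) => //=; rewrite ac.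
have [c' ac' zc'] := desc_first az za.
by rewrite (f_child ua ac' ac) in zc'; apply: IH ac p_path z zc'.
Qed.

Lemma desc_child a x c : has_parent a -> x \in desc a -> (x, c) \in f -> succ_in (desc a) x c.
Proof.
move=> pa xa xc; apply/succ_inP; split=> //; first exact: desc_trans xa (desc_arc xc).
  exact: f_incr.
move=> z za; apply/negP => /andP[xz zc].
case/orP: (desc_total pa xa za) => [zx|/desc_le]; last by rewrite leNgt xz.
have zx' : z != x by apply: contraTneq xz => ->; rewrite ltxx.
have [c' xc' c'z] := desc_first zx zx'.
have [u ux] : has_parent x.
  have [->//|xa'] := eqVneq x a; by have [p _ px] := desc_parent xa xa'; exists p.
by rewrite (f_child ux xc' xc) in c'z; have := desc_le c'z; rewrite leNgt zc.
Qed.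

Lemma desc_leaf a x : has_parent a -> x \in desc a -> (forall c, (x, c) \notin f) ->
  {in desc a, forall z, A z <= A x}.
Proof.
move=> pa xa leaf z za; case/orP: (desc_total pa xa za) => [zx|/desc_le //].
have [->//|zx'] := eqVneq z x; have [c xc _] := desc_first zx zx'.
by have := leaf c; rewrite xc.
Qed.

Lemma succ_fun_first_child a : has_parent a -> succ_fun (first_child A f) (desc a).
Proof.
move=> pa x xa; rewrite /first_child; case E: (outs A f x) => [|c s] /=.
  by split=> // _; apply: desc_leaf => // c; rewrite -mem_outs E.
by split=> // y [<-]; apply: desc_child; rewrite // -mem_outs E mem_head.
Qed.

Lemma child_desc_ucomp r c : (r, c) \in f -> {subset desc c <= ucomp f r}.
Proof. by move=> rc z /desc_ucomp; rewrite (ucomp_eq (ucomp_arc rc)). Qed.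

Lemma root_succ_child r y : r \in forest_roots f -> succ_in (ucomp f r) r y -> (r, y) \in f.
Proof.
move=> r_root ry; have /succ_inP[_ yr r_lt_y between] := ry.
case: (ucomp_root_cases r_root yr) => [yr'|[c rc yc]]; first by rewrite yr' ltxx in r_lt_y.
have cy := desc_le yc; have := between c (ucomp_arc rc); rewrite f_incr //= -leNgt => yc'.
by have -> : y = c by apply: A_inj; apply/le_anti; rewrite yc'.
Qed.

Lemma desc_succ_child c x y : has_parent c -> x \in desc c -> y \in desc c ->
  succ_in (ucomp f x) x y -> (x, y) \in f.
Proof.
move=> pc xc yc xy; have xy_c : succ_in (desc c) x y.
  apply: succ_in_subset xy => //; apply/subsetP => z zc.
  by rewrite (ucomp_eq (desc_ucomp xc)); apply: desc_ucomp.
case: (pickP (fun d => (x, d) \in f)) => [d xd|leaf].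
  by rewrite -(succ_in_fun (desc_child pc xc xd) xy_c).
have /succ_inP[_ _ xy_lt _] := xy_c.
by have := desc_leaf pc xc (fun d => negbT (leaf d)) yc; rewrite leNgt xy_lt.
Qed.

Hypothesis f_deg : forall r, (size (outs A f r) <= 2)%N.

Lemma merge_subtree_arcs r a b : outs A f r = [:: a; b] ->
  let Z := zip_merge A n.+1 (first_child A f) (first_child A f) a b set0 in
  (forall e, e \in Z -> straddle (desc a) (desc b) e.1 e.2 /\ A e.1 < A e.2) /\
  (forall x y, straddle (desc a) (desc b) x y -> succ_in (desc a :|: desc b) x y -> (x, y) \in Z).
Proof.
move=> outs_r Z.
have [ra rb] : (r, a) \in f /\ (r, b) \in f by rewrite -!mem_outs outs_r !inE !eqxx ?orbT.
have ab : a != b by have := outs_uniq f r; rewrite outs_r /= inE andbT.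
have dis : {in desc a, forall z, z \notin desc b} by move=> z; apply: desc_disjoint ra rb ab.
have [sa sb] : succ_fun (first_child A f) (desc a) /\ succ_fun (first_child A f) (desc b).
  by split; apply: succ_fun_first_child; exists r.
split=> [e eZ|x y xy_str xy_succ].
  have [|//] := zip_merge_arcs dis sa sb (desc_refl a) (desc_refl b) eZ.
  by rewrite in_set0.
have upper_desc c : upper (desc c) c = desc c by apply: upper_min => z; apply: desc_le.
apply: (zip_merge_complete dis set0 sa sb (desc_refl a) (desc_refl b)) xy_str _.
  by rewrite !upper_desc (leq_trans (max_card _)) ?card_ord.
by rewrite !upper_desc.
Qed.

Lemma mem_merge_subtrees e : e \in merge_subtrees A f ->
  e \in f \/ exists r a b,
    [/\ outs A f r = [:: a; b], straddle (desc a) (desc b) e.1 e.2 & A e.1 < A e.2].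
Proof.
rewrite in_setU => /orP[|/bigcupP[r /andP[_ outs2] eZ]]; first by left.
have outs_r : outs A f r = [:: nth r (outs A f r) 0; nth r (outs A f r) 1].
  by move: outs2; case: (outs A f r) => [|a [|b []]].
right; exists r, (nth r (outs A f r) 0), (nth r (outs A f r) 1).
by have [/(_ e eZ)[]] := merge_subtree_arcs outs_r.
Qed.

Lemma ucomp_merge_subtrees : ucomp (merge_subtrees A f) =1 ucomp f.
Proof.
have f_sub : f \subset merge_subtrees A f by apply: subsetUl.
apply: ucomp_blocks => [y|y z|u v|y z yz]; first exact: ucomp_refl; first exact: ucomp_eq.
  case/mem_merge_subtrees => [/ucomp_arc //|[r [a [b [outs_r uv_str _]]]]].
  have [ra rb] : (r, a) \in f /\ (r, b) \in f by rewrite -!mem_outs outs_r !inE !eqxx ?orbT.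
  have ab_r z : (z \in desc a) || (z \in desc b) -> z \in ucomp f r.
    by case/orP => [/(child_desc_ucomp ra)|/(child_desc_ucomp rb)].
  have [ur vr] : u \in ucomp f r /\ v \in ucomp f r.
    by case/orP: uv_str => /andP[ua vb]; rewrite !ab_r ?ua ?vb ?orbT.
  by rewrite (ucomp_eq ur).
by rewrite -ucompE; apply: subsetP (ucompS y f_sub) z yz.
Qed.

Lemma merge_subtrees_straddle r c c' x y : r \in forest_roots f ->
  (r, c) \in f -> (r, c') \in f -> c != c' -> x \in desc c -> y \in desc c' ->
  succ_in (ucomp f r) x y -> (x, y) \in merge_subtrees A f.
Proof.
move=> r_root rc rc' cc' xc yc' xy.
have outs2 : size (outs A f r) == 2.
  have sub : {subset [:: c; c'] <= outs A f r}.
    by move=> z; rewrite !inE => /orP[] /eqP->; rewrite mem_outs.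
  by rewrite eqn_leq f_deg (uniq_leq_size _ sub) //= inE cc'.
rewrite in_setU; apply/orP; right; apply/bigcupP; exists r; first by rewrite r_root outs2.
move: outs2; case E: (outs A f r) => [|a [|b []]] // _ /=.
have [_ complete] := merge_subtree_arcs E.
have [ra rb] : (r, a) \in f /\ (r, b) \in f by rewrite -!mem_outs E !inE !eqxx ?orbT.
have ab_sub : desc a :|: desc b \subset ucomp f r.
  by apply/subsetP => z /setUP[/(child_desc_ucomp ra)|/(child_desc_ucomp rb)].
have : c \in [:: a; b] by rewrite -E mem_outs.
have : c' \in [:: a; b] by rewrite -E mem_outs.
rewrite !inE => /orP[]/eqP c'_eq /orP[]/eqP c_eq; subst c c'; try by rewrite eqxx in cc'.
all: apply: complete; first by rewrite /straddle xc yc' ?orbT.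
all: by apply: succ_in_subset ab_sub _ _ xy; rewrite in_setU ?xc ?yc' ?orbT.
Qed.

Lemma merge_subtrees_saturated : saturated (merge_subtrees A f).
Proof.
have f_sub : f \subset merge_subtrees A f by apply: subsetUl.
split=> [u v /mem_merge_subtrees[/f_incr //|[r [a [b [_ _ //]]]]]|x y].
rewrite ucomp_merge_subtrees => xy; have [r r_root xr] := root_exists x.
have xy_r : succ_in (ucomp f r) x y by rewrite -(ucomp_eq xr).
have /succ_inP[_ yr xy_lt _] := xy_r.
case: (ucomp_root_cases r_root xr) => [xr'|[c rc xc]].
  by subst x; rewrite (subsetP f_sub) // root_succ_child.
case: (ucomp_root_cases r_root yr) => [yr'|[c' rc' yc']].
  by have := root_min r_root xr; rewrite -yr' leNgt xy_lt.
have [cc'|cc'] := eqVneq c c'; last exact: merge_subtrees_straddle rc rc' cc' xc yc' xy_r.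
by subst c'; rewrite (subsetP f_sub) // (desc_succ_child _ xc yc') //; exists r.
Qed.

End Forest.

(** * The forest of the reach-one graph *)

Lemma corr_graph_incr : increasing (corr_graph A).
Proof. by move=> u v; rewrite inE => /and3P[]. Qed.

Lemma corr_graph_adj u v : (u, v) \in corr_graph A -> cyc_adj u v.
Proof. by rewrite inE => /and3P[]. Qed.

Section CorrespondingForest.
Variable vis : seq 'I_n.
Let F := dfs_forest A (corr_graph A) vis.

Lemma corr_forest_sub : F \subset corr_graph A.
Proof. by have [] := dfs_forest_inv (corr_graph A) vis. Qed.

Lemma corr_forest_incr : increasing F.
Proof. by move=> u v /(subsetP corr_forest_sub) /corr_graph_incr. Qed.

Lemma corr_forest_parent_unique : parent_unique F.
Proof. by have [] := dfs_forest_inv (corr_graph A) vis. Qed.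

Lemma corr_forest_adj u v : (u, v) \in F -> cyc_adj u v.
Proof. by move/(subsetP corr_forest_sub)/corr_graph_adj. Qed.

Lemma corr_forest_child u w c1 c2 : (u, w) \in F -> (w, c1) \in F -> (w, c2) \in F -> c1 = c2.
Proof.
(* w has only two cyclic neighbours, and one of them is its parent u. *)
move=> uw wc1 wc2; case: (eqVneq c1 c2) => // c12; exfalso.
have wu : cyc_adj w u by rewrite cyc_adjC corr_forest_adj.
have [wc1' wc2'] := (corr_forest_adj wc1, corr_forest_adj wc2).
have uc1 := lt_trans (corr_forest_incr uw) (corr_forest_incr wc1).
have uc2 := lt_trans (corr_forest_incr uw) (corr_forest_incr wc2).
apply: (cyc_adj_no3 wu wc1' wc2' _ _ c12).
  by apply: contraTneq uc1 => ->; rewrite ltxx.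
by apply: contraTneq uc2 => ->; rewrite ltxx.
Qed.

Lemma corr_forest_deg r : (size (outs A F r) <= 2)%N.
Proof.
have := outs_uniq F r; case E: (outs A F r) => [|a [|b [|c s]]] //=.
rewrite !inE !negb_or => /and4P[/and3P[ab ac _] /andP[bc _] _ _].
have adj x : x \in outs A F r -> cyc_adj r x by rewrite mem_outs => /corr_forest_adj.
by case: (cyc_adj_no3 (adj a _) (adj b _) (adj c _) ab ac bc); rewrite E !inE eqxx ?orbT.
Qed.

End CorrespondingForest.
End Array.

Unset Implicit Arguments.
Set Strict Implicit.

Theorem lemma2 (R : realType) (n : nat) (A : 'I_n -> R) (vis rs : seq 'I_n) :
  injective A ->
  perm_eq vis (enum 'I_n) ->
  let F := dfs_forest A (corr_graph A) vis in
  perm_eq rs (enum (forest_roots F)) ->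
  let HR := merge_step A (merge_subtrees A F) rs in
  let F' := dfs_forest A HR.1 HR.2 in
  forall x : 'I_n, is_dpath F' (ucomp F' x).
Proof.
move=> A_inj _ F rs_roots HR F' x.
have F_incr : increasing A F := @corr_forest_incr R n A vis.
have F_par : parent_unique F := @corr_forest_parent_unique R n A vis.
have F_child := @corr_forest_child R n A vis.
have M_sat := merge_subtrees_saturated A_inj F_incr F_par F_child (corr_forest_deg A vis).
have M_ucomp := ucomp_merge_subtrees A_inj F_incr F_par F_child.
have roots_rs r : (r \in rs) = (r \in forest_roots F) by rewrite (perm_mem rs_roots) mem_enum.
have rs_ok : root_list A (merge_subtrees A F) rs.
  split=> [|r|r1 r2]; rewrite ?(perm_uniq rs_roots) ?enum_uniq // !roots_rs ?M_ucomp.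
    exact: root_min.
  exact: root_uniq.
have rs_cover y : covered (merge_subtrees A F) rs y.
  by have [r r_root yr] := root_exists F_incr y; apply/hasP; exists r; rewrite ?roots_rs ?M_ucomp.
move: (merge_step_spec A_inj M_sat rs_ok); rewrite /F' /HR.
case: (merge_step A _ rs) => H R' [H_sat R'_ok cov _ _] /=.
rewrite (dfs_forest_saturated A_inj H_sat R'_ok) => [|y]; first exact: succ_graph_dpath.
by rewrite cov.
Qed.
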